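(* Let $M,N,d$ be positive integers with $d>MN$. For $i=1,\dots,M$ let $X_i\in\mathbb{R}^{N\times d}$ and $y_i\in\mathbb{R}^N$, and suppose the stacked matrix $X_c=[X_1^T,\dots,X_M^T]^T\in\mathbb{R}^{MN\times d}$ has full row rank $MN$; let $y_c=[y_1^T,\dots,y_M^T]^T$. Consider Local-GD for linear regression with $w_0^0=0$: for $k=0,1,2,\dots$ each node $i$ runs gradient descent $w\mapsto w-\eta\nabla f_i(w)$ on $f_i(w)=\frac{1}{2N}\|y_i-X_iw\|^2$ initialized at $w_0^k$, with a constant step size small enough for convergence, until convergence, and sets $w_i^{k+1}$ to be the limit; then $w_0^{k+1}=\frac1M\sum_{i=1}^M w_i^{k+1}$. Let $w_c=X_c^T(X_cX_c^T)^{-1}y_c$ be the centralized model (the minimum-Euclidean-norm solution of $X_cw=y_c$, equivalently the limit of gradient descent from $0$ on the total squared loss). Then $w_0^K\to w_c$ as $K\to\infty$.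
   Context: Distributed setting with $M$ compute nodes; node $i$ holds data matrix $X_i$ (rows are samples) and labels $y_i$. Each local problem is solved to convergence in every communication round. *)

From HB Require Import structures.
From mathcomp Require Import all_boot all_order all_algebra.
From mathcomp Require Import all_classical all_reals all_analysis.
Set Implicit Arguments. Unset Strict Implicit. Unset Printing Implicit Defensive.
Import Order.TTheory GRing.Theory Num.Theory.
Import numFieldNormedType.Exports.
Local Open Scope classical_set_scope.
Local Open Scope ring_scope.

Section LocalGD.
Variable R : realType.

(* gradient of f(w) = 1/(2N) ||y - X w||^2, i.e. -(1/N) X^T (y - X w) *)
Definition lsq_grad (N d : nat) (X : 'M[R]_(N, d)) (y : 'cV[R]_N) (w : 'cV[R]_d)
  : 'cV[R]_d := - (N%:R^-1) *: (X^T *m (y - X *m w)).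

Definition gd_step (N d : nat) (eta : R) (X : 'M[R]_(N, d)) (y : 'cV[R]_N)
  (w : 'cV[R]_d) : 'cV[R]_d := w - eta *: lsq_grad X y w.

Definition gd_seq (N d : nat) (eta : R) (X : 'M[R]_(N, d)) (y : 'cV[R]_N)
  (w0 : 'cV[R]_d) (t : nat) : 'cV[R]_d := iter t (gd_step eta X y) w0.

(* convergence of a sequence of vectors in R^d (coordinatewise = in norm) *)
Definition cV_cvg_to (d : nat) (u : nat -> 'cV[R]_d) (l : 'cV[R]_d) : Prop :=
  forall j : 'I_d, ((fun t : nat => u t j ord0 : R) @ \oo --> (l j ord0 : R)).

(* the limit of a sequence of vectors (meaningful when it converges) *)
Definition cV_lim (d : nat) (u : nat -> 'cV[R]_d) : 'cV[R]_d :=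
  \col_(j < d) lim ((fun t : nat => u t j ord0 : R) @ \oo).

Fixpoint local_gd (M N d : nat) (eta : R) (X : 'I_M -> 'M[R]_(N, d))
  (y : 'I_M -> 'cV[R]_N) (k : nat) : 'cV[R]_d :=
  match k with
  | 0 => 0
  | k'.+1 => M%:R^-1 *:
      \sum_(i < M) cV_lim (gd_seq eta (X i) (y i) (local_gd eta X y k'))
  end.

End LocalGD.

(* Each node's gradient descent converges to the point of the affine solution
   set {w | X_i w = y_i} nearest to its starting point: the iterates only move
   in the row space of X_i, and the limit is a fixed point, hence a solution.
   So w |-> w - P_i (w - w_c), with P_i the orthogonal projection onto the row
   space of X_i, and the error e_k = w_0^k - w_c obeys
   e_(k+1) = e_k - (1/M) sum_i P_i e_k.  As |sum_i P_i e|^2 <= M sum_i |P_i e|^2,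
   this gives |e_(k+1)|^2 + (1/M) sum_i |P_i e_k|^2 <= |e_k|^2, so every
   X_i e_k = X_i P_i e_k tends to 0, i.e. X_c e_k -> 0.  Finally all iterates
   and w_c lie in the row space of X_c, on which X_c is injective: e_k -> 0. *)

From HB Require Import structures.
From mathcomp Require Import all_boot all_order all_algebra.
From mathcomp Require Import all_classical all_reals all_analysis.
From mathcomp Require Import lra ring.
Import Order.TTheory GRing.Theory Num.Theory.
Import numFieldNormedType.Exports.
Local Open Scope classical_set_scope.
Local Open Scope ring_scope.
Set Implicit Arguments. Unset Strict Implicit. Unset Printing Implicit Defensive.

Lemma sqr_sum_le (R : realDomainType) (n : nat) (a : 'I_n -> R) :
  (\sum_i a i) ^+ 2 <= n%:R * \sum_i a i ^+ 2.
Proof.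
set A := \sum_i a i; set S := \sum_i a i ^+ 2.
have spread : \sum_i (n%:R * a i - A) ^+ 2 = n%:R * (n%:R * S - A ^+ 2).
  under eq_bigr do rewrite sqrrB exprMn.
  rewrite !big_split /= sumrN sumrMnl -!mulr_sumr -mulr_suml sumr_const card_ord.
  rewrite -mulr_sumr -/A -/S -mulr_natr; ring.
case: n a @A @S spread => [|n] a A S spread.
  by rewrite /A /S !big_ord0 expr0n mul0r.
have : 0 <= n.+1%:R * (n.+1%:R * S - A ^+ 2).
  by rewrite -spread sumr_ge0 // => i _; rewrite sqr_ge0.
by rewrite pmulr_rge0 ?ltr0Sn // subr_ge0.
Qed.

Section EuclideanStructure.
Variable R : realDomainType.
Implicit Types (d : nat).

Definition vdot d (u v : 'cV[R]_d) : R := (u^T *m v) ord0 ord0.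
Definition sqnorm d (u : 'cV[R]_d) : R := vdot u u.

Lemma vdotE d (u v : 'cV[R]_d) : vdot u v = \sum_j u j ord0 * v j ord0.
Proof. by rewrite /vdot mxE; apply: eq_bigr => j _; rewrite mxE. Qed.

Lemma vdotC d (u v : 'cV[R]_d) : vdot u v = vdot v u.
Proof. by rewrite !vdotE; apply: eq_bigr => j _; rewrite mulrC. Qed.

Lemma vdotDl d (u v w : 'cV[R]_d) : vdot (u + v) w = vdot u w + vdot v w.
Proof. by rewrite /vdot linearD mulmxDl mxE. Qed.

Lemma vdotDr d (u v w : 'cV[R]_d) : vdot u (v + w) = vdot u v + vdot u w.
Proof. by rewrite vdotC vdotDl !(vdotC u). Qed.

Lemma vdotZl d a (u v : 'cV[R]_d) : vdot (a *: u) v = a * vdot u v.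
Proof. by rewrite /vdot linearZ -scalemxAl mxE. Qed.

Lemma vdotZr d a (u v : 'cV[R]_d) : vdot u (a *: v) = a * vdot u v.
Proof. by rewrite vdotC vdotZl vdotC. Qed.

Lemma vdot_sumr d (I : finType) (u : 'cV[R]_d) (v : I -> 'cV[R]_d) :
  vdot u (\sum_i v i) = \sum_i vdot u (v i).
Proof. by rewrite /vdot mulmx_sumr summxE. Qed.

Lemma vdot_mulmxl n d (A : 'M[R]_(n, d)) u v : vdot (A *m u) v = vdot u (A^T *m v).
Proof. by rewrite /vdot trmx_mul mulmxA. Qed.

Lemma sqnormE d (u : 'cV[R]_d) : sqnorm u = \sum_j u j ord0 ^+ 2.
Proof. by rewrite /sqnorm vdotE; under eq_bigr do rewrite -expr2. Qed.

Lemma sqnorm_ge0 d (u : 'cV[R]_d) : 0 <= sqnorm u.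
Proof. by rewrite sqnormE sumr_ge0 // => j _; rewrite sqr_ge0. Qed.

Lemma sqr_coord_le_sqnorm d (u : 'cV[R]_d) j : u j ord0 ^+ 2 <= sqnorm u.
Proof. by rewrite sqnormE (bigD1 j) //= lerDl sumr_ge0 // => k _; rewrite sqr_ge0. Qed.

Lemma sqnorm_eq0 d (u : 'cV[R]_d) : sqnorm u = 0 -> u = 0.
Proof.
move=> u0; apply/matrixP => j k; rewrite (ord1 k) mxE; apply/eqP.
by rewrite -sqrf_eq0 eq_le sqr_ge0 andbT -u0 sqr_coord_le_sqnorm.
Qed.

Lemma sqnormDZ d (u v : 'cV[R]_d) (a : R) :
  sqnorm (u + a *: v) = sqnorm u + 2 * a * vdot u v + a ^+ 2 * sqnorm v.
Proof.
by rewrite /sqnorm !(vdotDl, vdotDr, vdotZl, vdotZr) (vdotC v u); ring.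
Qed.

Lemma sqnorm_sum_le d (n : nat) (v : 'I_n -> 'cV[R]_d) :
  sqnorm (\sum_i v i) <= n%:R * \sum_i sqnorm (v i).
Proof.
rewrite sqnormE; under eq_bigr do rewrite summxE.
apply: le_trans (ler_sum _ (fun j _ => sqr_sum_le _)) _.
by rewrite -mulr_sumr exchange_big /=; under [X in _ <= _ * X]eq_bigr do rewrite sqnormE.
Qed.

End EuclideanStructure.

Section CoordinatewiseConvergence.
Variable R : realType.

Lemma eq_cV_cvg_to (d : nat) (u v : nat -> 'cV[R]_d) (l : 'cV[R]_d) :
  u =1 v -> cV_cvg_to u l -> cV_cvg_to v l.
Proof. by move=> uv ul j; under eq_cvg do rewrite -uv; exact: ul. Qed.

Lemma cV_cvg_toS (d : nat) (u : nat -> 'cV[R]_d) (l : 'cV[R]_d) :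
  cV_cvg_to u l -> cV_cvg_to (fun t => u t.+1) l.
Proof. by move=> ul j; have := ul j; rewrite -cvg_shiftS. Qed.

Lemma cV_cvg_to_affine (m d : nat) (A : 'M[R]_(m, d)) (b : 'cV[R]_m)
    (u : nat -> 'cV[R]_d) (l : 'cV[R]_d) :
  cV_cvg_to u l -> cV_cvg_to (fun t => A *m u t + b) (A *m l + b).
Proof.
move=> ul j; rewrite !mxE; under eq_cvg do rewrite !mxE.
apply: cvgD; last exact: cvg_cst.
apply: cvg_big => [|k _]; first exact: add_continuous.
by apply: cvgM; [exact: cvg_cst | exact: ul].
Qed.

Lemma cV_cvg_to_mul (m d : nat) (A : 'M[R]_(m, d))
    (u : nat -> 'cV[R]_d) (l : 'cV[R]_d) :
  cV_cvg_to u l -> cV_cvg_to (fun t => A *m u t) (A *m l).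
Proof.
move=> /(cV_cvg_to_affine (A := A) (b := 0)); rewrite addr0.
by apply: eq_cV_cvg_to => t; rewrite addr0.
Qed.

Lemma cV_cvg_to_mxcol (n : nat) (p_ : 'I_n -> nat) (u_ : forall i, nat -> 'cV[R]_(p_ i))
    (l_ : forall i, 'cV[R]_(p_ i)) :
  (forall i, cV_cvg_to (u_ i) (l_ i)) ->
  cV_cvg_to (fun t => \mxcol_i u_ i t) (\mxcol_i l_ i).
Proof. by move=> ul j; rewrite mxE; under eq_cvg do rewrite mxE; exact: ul. Qed.

Lemma cV_limE (d : nat) (u : nat -> 'cV[R]_d) (l : 'cV[R]_d) :
  cV_cvg_to u l -> cV_lim u = l.
Proof.
by move=> ul; apply/matrixP => j k; rewrite mxE (ord1 k); exact: cvg_lim (ul j).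
Qed.

Lemma cV_cvg_to_unique (d : nat) (u : nat -> 'cV[R]_d) (l l' : 'cV[R]_d) :
  cV_cvg_to u l -> cV_cvg_to u l' -> l = l'.
Proof. by move=> ul ul'; rewrite -(cV_limE ul) -(cV_limE ul'). Qed.

Lemma cV_cvg_to_iter_affine (d : nat) (f : 'cV[R]_d -> 'cV[R]_d) (A : 'M[R]_d)
    (b : 'cV[R]_d) (w l : 'cV[R]_d) :
  (forall v, f v = A *m v + b) -> cV_cvg_to (fun t => iter t f w) l -> f l = l.
Proof.
move=> fE ul; apply/esym/(cV_cvg_to_unique (cV_cvg_toS ul)); rewrite fE.
by apply: eq_cV_cvg_to (cV_cvg_to_affine (A := A) (b := b) ul) => t; rewrite iterS fE.
Qed.

Lemma sqnorm_cvg0 (d : nat) (u : nat -> 'cV[R]_d) :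
  (fun t => sqnorm (u t)) @ \oo --> 0 -> cV_cvg_to u 0.
Proof.
move=> /cvgrPdist_lt u0 j; rewrite mxE; apply/cvgrPdist_lt => e e0.
apply: filterS (u0 _ (exprn_gt0 2 e0)) => t.
rewrite !sub0r !normrN ger0_norm ?sqnorm_ge0 // => ut.
rewrite -(ltr_pXn2r (n := 2)) ?nnegrE ?normr_ge0 ?ltW // real_normK ?num_real //.
exact: le_lt_trans (sqr_coord_le_sqnorm (u t) j) ut.
Qed.

Lemma descent_decrement_cvg0 (u b : nat -> R) :
  (forall k, 0 <= u k) -> (forall k, 0 <= b k) -> (forall k, u k.+1 + b k <= u k) ->
  b @ \oo --> 0.
Proof.
move=> u_ge0 b_ge0 descent.
have u_noninc : nonincreasing_seq u.
  by apply/nonincreasing_seqP => k; apply: le_trans (descent k); rewrite lerDl.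
have ul : cvgn u by apply: nonincreasing_is_cvgn u_noninc _; exists 0 => _ [k _ <-].
have u_diff : (fun k => u k - u k.+1) @ \oo --> 0.
  by rewrite -(subrr (limn u)); apply: cvgB => //; rewrite cvg_shiftS.
apply: (squeeze_cvgr _ (cvg_cst 0) u_diff); apply: nearW => k.
by rewrite b_ge0 lerBrDr addrC descent.
Qed.

End CoordinatewiseConvergence.

Section RowSpaceProjection.
Variables (R : realFieldType) (m n : nat).
Implicit Types (X : 'M[R]_(m, n)) (u : 'cV[R]_n).

Definition rpinvmx X : 'M[R]_(n, m) := X^T *m invmx (X *m X^T).
Definition rowproj X : 'M[R]_n := rpinvmx X *m X.

Lemma row_free_gram_unit X : row_free X -> X *m X^T \in unitmx.
Proof.
move=> Xfree; rewrite -row_free_unit; apply/inj_row_free => v vG0.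
have : sqnorm (X^T *m v^T) = 0.
  by rewrite /sqnorm vdot_mulmxl trmxK mulmxA /vdot trmxK mulmxA vG0 mul0mx mxE.
move/sqnorm_eq0/(congr1 trmx); rewrite trmx_mul !trmxK trmx0 => vX0.
by apply: (row_free_inj Xfree); rewrite vX0 mul0mx.
Qed.

Lemma rpinvmx_sub X (v : 'cV[R]_m) : ((rpinvmx X *m v)^T <= X)%MS.
Proof. by rewrite /rpinvmx -mulmxA trmx_mul trmxK submxMl. Qed.

Section RowFree.
Variables (X : 'M[R]_(m, n)) (Xfree : row_free X).
Let XXt_unit := row_free_gram_unit Xfree.

Lemma mulmx_rpinv : X *m rpinvmx X = 1%:M.
Proof. by rewrite /rpinvmx mulmxA mulmxV. Qed.

Lemma mulmx_rowproj : X *m rowproj X = X.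
Proof. by rewrite /rowproj mulmxA mulmx_rpinv mul1mx. Qed.

Lemma rowproj_trmx : rowproj X *m X^T = X^T.
Proof. by rewrite /rowproj /rpinvmx -!mulmxA mulVmx ?mulmx1. Qed.

Lemma trmx_rowproj : (rowproj X)^T = rowproj X.
Proof. by rewrite /rowproj /rpinvmx !trmx_mul trmx_inv trmx_mul !trmxK mulmxA. Qed.

Lemma rowproj_idem : rowproj X *m rowproj X = rowproj X.
Proof. by rewrite {1}/rowproj -mulmxA mulmx_rowproj. Qed.

Lemma vdot_rowproj u : vdot u (rowproj X *m u) = sqnorm (rowproj X *m u).
Proof. by rewrite /sqnorm vdot_mulmxl trmx_rowproj mulmxA rowproj_idem. Qed.

Lemma rowproj_id u : (u^T <= X)%MS -> rowproj X *m u = u.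
Proof.
case/submxP=> v /(congr1 trmx); rewrite trmxK trmx_mul => ->.
by rewrite mulmxA rowproj_trmx.
Qed.

End RowFree.
End RowSpaceProjection.

Section BlockRows.
Variable F : fieldType.

Lemma row_free_rowsub m m' n (f : 'I_m' -> 'I_m) (A : 'M[F]_(m, n)) :
  injective f -> row_free A -> row_free (rowsub f A).
Proof.
move=> finj Afree; apply/inj_row_free => v.
rewrite rowsubE mulmxA -(mul0mx _ A) => /(row_free_inj Afree) v0.
apply/matrixP => i j; have := congr1 (fun (B : 'M[F]_(1, m)) => B i (f j)) v0.
rewrite !mxE (bigD1 j) //= big1 => [|k kj]; rewrite !mxE ?eqxx ?mulr1 ?addr0 //.
by rewrite (inj_eq finj) (negbTE kj) mulr0.
Qed.

Variables (p n : nat) (p_ : 'I_p -> nat) (B_ : forall i, 'M[F]_(p_ i, n)).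

Lemma row_free_mxcol_block i : row_free (\mxcol_j B_ j) -> row_free (B_ i).
Proof.
have Rank_inj : injective (@tagnat.Rank _ p_ i).
  by move=> k l /(congr1 val)/eqP; rewrite tagnat.eq_Rank eqxx => /eqP/val_inj.
by move/(row_free_rowsub Rank_inj); rewrite -[rowsub _ _]/(submxcol _ i) mxcolK.
Qed.

Lemma mxcol_block_sub i : (B_ i <= \mxcol_j B_ j)%MS.
Proof. by rewrite -{1}(mxcolK B_ i); exact: rowsub_sub. Qed.

End BlockRows.

Section GradientDescent.
Variables (R : realType) (N d : nat) (eta : R) (X : 'M[R]_(N, d)) (y : 'cV[R]_N).
Local Notation c := (eta / N%:R).

Lemma gd_stepE v : gd_step eta X y v = v + c *: (X^T *m (y - X *m v)).
Proof. by rewrite /gd_step /lsq_grad scaleNr scalerN opprK scalerA. Qed.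

Lemma gd_step_affine v :
  gd_step eta X y v = (1%:M - c *: (X^T *m X)) *m v + c *: (X^T *m y).
Proof.
rewrite gd_stepE mulmxBl mul1mx mulmxBr scalerBr -scalemxAl mulmxA.
by rewrite addrA addrAC.
Qed.

Lemma gd_step_fixed_solve l :
  (0 < N)%N -> eta != 0 -> row_free X -> gd_step eta X y l = l -> X *m l = y.
Proof.
move=> N0 eta0 /row_free_gram_unit XXt_unit.
rewrite gd_stepE => /eqP; rewrite -subr_eq0 addrC addKr.
rewrite scaler_eq0 mulf_eq0 invr_eq0 pnatr_eq0 (negbTE eta0) (gtn_eqF N0) /= => /eqP res0.
have : invmx (X *m X^T) *m X *m (X^T *m (y - X *m l)) = y - X *m l.
  by rewrite mulmxA -(mulmxA (invmx _)) mulVmx // mul1mx.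
by rewrite res0 mulmx0 => /esym/eqP; rewrite subr_eq0 => /eqP.
Qed.

Lemma rowproj_compl_gd_seq w t :
  row_free X ->
  (1%:M - rowproj X) *m gd_seq eta X y w t = (1%:M - rowproj X) *m w.
Proof.
move=> Xfree; have compl_Xt : (1%:M - rowproj X) *m X^T = 0.
  by rewrite mulmxBl mul1mx rowproj_trmx // subrr.
elim: t => // t IH.
rewrite /gd_seq iterS -/(gd_seq eta X y w t) gd_stepE mulmxDr IH -scalemxAr.
by rewrite mulmxA compl_Xt mul0mx scaler0 addr0.
Qed.

Lemma gd_seq_limit w l :
  (0 < N)%N -> eta != 0 -> row_free X -> cV_cvg_to (gd_seq eta X y w) l ->
  l = w + rpinvmx X *m (y - X *m w).
Proof.
move=> N0 eta0 Xfree wl.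
have Xl : X *m l = y.
  exact/(gd_step_fixed_solve N0 eta0 Xfree)/(cV_cvg_to_iter_affine gd_step_affine wl).
have compl : (1%:M - rowproj X) *m l = (1%:M - rowproj X) *m w.
  apply: (cV_cvg_to_unique (cV_cvg_to_mul (A := 1%:M - rowproj X) wl)) => j.
  under eq_cvg do rewrite rowproj_compl_gd_seq //.
  exact: cvg_cst.
have -> : l = (1%:M - rowproj X) *m l + rowproj X *m l by rewrite mulmxBl mul1mx subrK.
rewrite compl /rowproj -mulmxA Xl mulmxBl mul1mx mulmxBr mulmxA.
by rewrite addrA [LHS]addrAC.
Qed.

End GradientDescent.

Section LocalGDAnalysis.
Variables (R : realType) (M N d : nat) (eta : R).
Variables (X : 'I_M -> 'M[R]_(N, d)) (y : 'I_M -> 'cV[R]_N).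
Hypotheses (M0 : (0 < M)%N) (N0 : (0 < N)%N) (eta0 : eta != 0).
Hypothesis Xfree : forall i, row_free (X i).
Hypothesis gd_cvg : forall i w, exists l, cV_cvg_to (gd_seq eta (X i) (y i) w) l.

Lemma local_gdS k :
  local_gd eta X y k.+1 = M%:R^-1 *:
    \sum_i (local_gd eta X y k + rpinvmx (X i) *m (y i - X i *m local_gd eta X y k)).
Proof.
congr (_ *: _); apply: eq_bigr => i _.
have [l wl] := gd_cvg i (local_gd eta X y k).
by rewrite (cV_limE wl) -(gd_seq_limit N0 eta0 (Xfree i) wl).
Qed.

Lemma local_gd_sub k : ((local_gd eta X y k)^T <= \mxcol_i X i)%MS.
Proof.
elim: k => [|k IH]; first by rewrite trmx0 sub0mx.
rewrite local_gdS linearZ scalemx_sub // linear_sum summx_sub // => i _.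
by rewrite linearD addmx_sub // (submx_trans (rpinvmx_sub _ _)) ?mxcol_block_sub.
Qed.

Variables (ws : 'cV[R]_d) (ws_solves : forall i, X i *m ws = y i).
Local Notation e k := (local_gd eta X y k - ws).

Lemma local_gd_errorS k :
  e k.+1 = e k - M%:R^-1 *: \sum_i rowproj (X i) *m e k.
Proof.
rewrite local_gdS.
under eq_bigr do rewrite -ws_solves -mulmxBr mulmxA -/(rowproj _) -opprB mulmxN.
rewrite big_split /= sumrN sumr_const card_ord scalerDr scalerN.
rewrite -[local_gd eta X y k *+ M]scaler_nat scalerA.
by rewrite mulVf ?pnatr_eq0 -?lt0n // scale1r addrAC.
Qed.

Lemma sqnorm_local_gd_errorS k :
  sqnorm (e k.+1) + M%:R^-1 * \sum_i sqnorm (rowproj (X i) *m e k) <= sqnorm (e k).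
Proof.
rewrite local_gd_errorS -scaleNr sqnormDZ vdot_sumr.
under eq_bigr do rewrite vdot_rowproj //.
have := sqnorm_sum_le (fun i => rowproj (X i) *m e k).
set S := sqnorm _; set T := \sum_i _; set a := M%:R^-1 => ST.
have aM : a ^+ 2 * (M%:R * T) = a * T by rewrite /a; field; rewrite pnatr_eq0 -lt0n.
have : a ^+ 2 * S <= a * T by rewrite -aM ler_wpM2l ?sqr_ge0.
by rewrite sqrrN; lra.
Qed.

Lemma local_gd_residual_cvg0 i : cV_cvg_to (fun k => X i *m e k) 0.
Proof.
set P := rowproj (X i).
have M_neq0 : M%:R != 0 :> R by rewrite pnatr_eq0 -lt0n.
have a0 : (0 : R) < M%:R^-1 by rewrite invr_gt0 ltr0n.
have descent : (fun k => M%:R^-1 * sqnorm (P *m e k)) @ \oo --> 0.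
  apply: (descent_decrement_cvg0 (u := fun k => sqnorm (e k))) => k.
  - exact: sqnorm_ge0.
  - by rewrite mulr_ge0 ?sqnorm_ge0 ?ltW.
  apply: le_trans (sqnorm_local_gd_errorS k).
  rewrite lerD2l; apply: ler_wpM2l; first exact: ltW.
  by rewrite (bigD1 i) //= lerDl sumr_ge0 // => j _; rewrite sqnorm_ge0.
have : (fun k => sqnorm (P *m e k)) @ \oo --> 0.
  rewrite -(mulr0 M%:R); under eq_cvg do rewrite -[sqnorm _](mulVKf M_neq0).
  exact: cvgM (cvg_cst _) descent.
move=> /sqnorm_cvg0/(cV_cvg_to_mul (A := X i)); rewrite mulmx0.
by apply: eq_cV_cvg_to => k; rewrite mulmxA mulmx_rowproj.
Qed.

End LocalGDAnalysis.

Theorem theorem1 (R : realType) (M N d : nat)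
  (hM : (0 < M)%N) (hN : (0 < N)%N) (hd : (M * N < d)%N)
  (X : 'I_M -> 'M[R]_(N, d)) (y : 'I_M -> 'cV[R]_N)
  (hrank : row_free (\mxcol_(i < M) X i))
  (eta : R) (heta : 0 < eta)
  (hconv : forall (i : 'I_M) (w : 'cV[R]_d),
      exists l : 'cV[R]_d, cV_cvg_to (gd_seq eta (X i) (y i) w) l) :
  let Xc := \mxcol_(i < M) X i in
  let yc := \mxcol_(i < M) y i in
  let wc := Xc^T *m invmx (Xc *m Xc^T) *m yc in
  cV_cvg_to (fun K => local_gd eta X y K) wc.
Proof.
move=> Xc yc wc.
have Xfree i : row_free (X i) := row_free_mxcol_block i hrank.
have eta0 : eta != 0 := lt0r_neq0 heta.
have wc_solves i : X i *m wc = y i.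
  rewrite -(mxcolK X i) submxcol_mul /wc -/(rpinvmx Xc) mulmxA.
  by rewrite mulmx_rpinv // mul1mx mxcolK.
have residual_cvg0 : cV_cvg_to (fun k => Xc *m (local_gd eta X y k - wc)) 0.
  have := cV_cvg_to_mxcol (local_gd_residual_cvg0 hM hN eta0 Xfree hconv wc_solves).
  by rewrite mxcol0; apply: eq_cV_cvg_to => k; rewrite mxcol_mul.
have := cV_cvg_to_affine (A := rpinvmx Xc) (b := wc) residual_cvg0.
rewrite mulmx0 add0r; apply: eq_cV_cvg_to => k.
rewrite mulmxA -/(rowproj Xc) rowproj_id ?subrK //.
by rewrite linearB addmx_sub ?eqmx_opp ?local_gd_sub ?rpinvmx_sub.
Qed.
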